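(* Let $(f_n)\subset L^1(\mathbb{R})$ be tight and approximately Hölder continuous. Then for every $\varepsilon>0$ there exist $n_0\in\mathbb{N}$ and $\delta>0$ such that for every $n\ge n_0$ there exists $\chi\in\mathcal{T}_\delta(\mathbb{R})$ with $\|f_n-\chi\|_{L^1(\mathbb{R})}\le\varepsilon$.
   Context: Tight: for every $\varepsilon>0$ there is $R>0$ with $\int_{|x|\ge R}|f_n(x)|\,dx\le\varepsilon$ for all $n$. Approximately Hölder continuous with exponent $\alpha\in(0,1]$: there is a constant $C>0$ such that for every $\varepsilon>0$ there is $n(\varepsilon)$ with $|f_n(x)-f_n(y)|\le C|x-y|^\alpha$ whenever $|x-y|\ge\varepsilon$ and $n\ge n(\varepsilon)$. $\mathcal{T}_\delta(\mathbb{R})$ is the set of step functions $\sum_ka_k\chi_{I_k}$ with disjoint intervals $I_k$ of length (step-width) at least $\delta$. *)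

From HB Require Import structures.
From mathcomp Require Import all_boot all_order all_algebra.
From mathcomp Require Import all_classical all_reals all_analysis.
Set Implicit Arguments. Unset Strict Implicit. Unset Printing Implicit Defensive.
Import Order.TTheory GRing.Theory Num.Theory.
Import numFieldNormedType.Exports.
Local Open Scope classical_set_scope.
Local Open Scope ring_scope.

Definition L1_seq (R : realType) (f : nat -> R -> R) : Prop :=
  forall n, (@lebesgue_measure R).-integrable setT (fun x => (f n x)%:E).

Definition tight (R : realType) (f : nat -> R -> R) : Prop :=
  forall eps : R, 0 < eps -> exists Rr : R, 0 < Rr /\
    forall n, (\int[@lebesgue_measure R]_(x in [set x : R | (Rr <= `|x|)%R])
                 `|(f n x)%:E| <= eps%:E)%E.

Definition approx_holder (R : realType) (alpha : R) (f : nat -> R -> R) : Prop :=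
  exists C : R, 0 < C /\
    forall eps : R, 0 < eps -> exists N : nat, forall n, (N <= n)%N ->
      forall x y : R, eps <= `|x - y| ->
        `|f n x - f n y| <= C * `|x - y| `^ alpha.

Definition interval_with_ends (R : realType) (I : set R) (l r : R) : Prop :=
  l <= r /\ `]l, r[ `<=` I /\ I `<=` `[l, r] /\
  (forall x y z, I x -> I z -> x <= y -> y <= z -> I y).

Definition step_delta (R : realType) (delta : R) (chi : R -> R) : Prop :=
  exists (K : nat) (a l r : nat -> R) (I : nat -> set R),
    (forall k, (k < K)%N -> interval_with_ends (I k) (l k) (r k) /\
                            delta <= r k - l k) /\
    (forall j k, (j < K)%N -> (k < K)%N -> j <> k -> I j `&` I k = set0) /\
    (forall x, chi x = \sum_(k < K) a k * \1_(I k) x).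

From HB Require Import structures.
From mathcomp Require Import all_boot all_order all_algebra.
From mathcomp Require Import all_classical all_reals all_analysis.
From mathcomp Require Import measurable_realfun ring lra.
Set Implicit Arguments. Unset Strict Implicit. Unset Printing Implicit Defensive.
Import Order.TTheory GRing.Theory Num.Theory.
Import numFieldNormedType.Exports.
Local Open Scope classical_set_scope.
Local Open Scope ring_scope.

(* Tightness leaves at most eps/2 of the mass of every f_n outside [-r, r[.
   Cut [-r, r[ into M cells of width delta and let chi sample f_n at the left
   end of each cell and vanish outside [-r, r[.  Approximate Hoelder continuity
   only controls |f_n x - f_n y| for |x - y| >= delta, so a point x of a cell
   is compared with the left end l of its cell through the far point
   l + 2 delta.  Hence |f_n - chi| <= 2 C (2 delta)^alpha on [-r, r[, whose
   integral 4 C r (2 delta)^alpha is below eps/2 once M is large. *)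

Lemma far_holder_near_le (R : realType) (g : R -> R) (C alpha delta l x : R) :
  0 <= C -> 0 <= alpha -> 0 < delta ->
  (forall x y, delta <= `|x - y| -> `|g x - g y| <= C * `|x - y| `^ alpha) ->
  l <= x < l + delta -> `|g x - g l| <= 2 * C * (2 * delta) `^ alpha.
Proof.
move=> C_ge0 alpha_ge0 delta_gt0 holder /andP[lx xl].
pose z := l + 2 * delta.
have xz_le : `|x - z| <= 2 * delta by rewrite distrC ger0_norm /z; lra.
have zl : `|z - l| = 2 * delta.
  by rewrite /z addrAC subrr add0r ger0_norm //; lra.
have holder_le y y' : delta <= `|y - y'| <= 2 * delta ->
    `|g y - g y'| <= C * (2 * delta) `^ alpha.
  move=> /andP[far near]; apply: (le_trans (holder _ _ far)).
  by rewrite ler_wpM2l // ge0_ler_powR // nnegrE // mulr_ge0 // ltW.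
rewrite -mulrA mulr_natl mulr2n -[g x](subrK (g z)) -addrA.
apply: le_trans (ler_normD _ _) _; apply: lerD; apply: holder_le.
  by rewrite xz_le distrC ger0_norm /z; lra.
by rewrite zl lexx andbT; lra.
Qed.

Section grid_step.
Variables (R : realType) (a delta : R) (M : nat).
Hypothesis delta_gt0 : 0 < delta.

Definition grid_node (k : nat) : R := a + k%:R * delta.

Definition grid_cell (k : nat) : set R := [set` `[grid_node k, grid_node k.+1[].

Definition grid_index (x : R) : nat := Num.truncn ((x - a) / delta).

Definition grid_step (g : R -> R) (x : R) : R :=
  \sum_(k < M) g (grid_node k) * \1_(grid_cell k) x.

Lemma grid_nodeS k : grid_node k.+1 = grid_node k + delta.
Proof. by rewrite /grid_node -natr1 mulrDl mul1r addrA. Qed.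

Lemma grid_node_le_lt k x :
  (grid_node k <= x < grid_node k.+1) = (k%:R <= (x - a) / delta < k.+1%:R).
Proof.
by rewrite /grid_node !ler_pdivlMr // !ltr_pdivrMr // !lerBrDl !ltrBlDl.
Qed.

Lemma in_grid_cell k x :
  (x \in grid_cell k) = (a <= x) && (grid_index x == k).
Proof.
rewrite /grid_cell mem_setE in_itv /= grid_node_le_lt /grid_index.
have [ax|xa] := leP a x.
  by rewrite truncn_eq // divr_ge0 ?subr_ge0 // ltW.
apply/negbTE; rewrite negb_and -ltNge; apply/orP; left.
by rewrite (lt_le_trans _ (ler0n _ k)) // pmulr_llt0 ?invr_gt0 // subr_lt0.
Qed.

Lemma grid_node_index x :
  a <= x -> grid_node (grid_index x) <= x < grid_node (grid_index x) + delta.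
Proof.
move=> ax; rewrite -grid_nodeS.
by have := in_grid_cell (grid_index x) x; rewrite ax eqxx /= mem_setE in_itv.
Qed.

Lemma grid_index_lt x : a <= x -> (grid_index x < M)%N = (x < grid_node M).
Proof.
move=> ax; rewrite /grid_index truncn_lt_nat.
  by rewrite ltr_pdivrMr // ltrBlDl.
by rewrite divr_ge0 ?subr_ge0 // ltW.
Qed.

Lemma grid_stepE g x : grid_step g x =
  if (a <= x) && (grid_index x < M)%N then g (grid_node (grid_index x)) else 0.
Proof.
rewrite /grid_step; case: ifP => [/andP[ax xM]|outside].
  rewrite (bigD1 (Ordinal xM)) //= big1 => [|k /negbTE kx].
    by rewrite indicE in_grid_cell ax eqxx mulr1 addr0.
  rewrite indicE in_grid_cell ax eq_sym -[grid_index x]/(val (Ordinal xM)).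
  by rewrite val_eqE kx mulr0.
apply: big1 => k _; rewrite indicE in_grid_cell.
case: (a <= x) outside => /= [/negbT xM|_]; last by rewrite mulr0.
have /negbTE-> : grid_index x != k by apply: contraNneq xM => ->.
by rewrite mulr0.
Qed.

Lemma grid_step_out g x : ~~ (a <= x < grid_node M) -> grid_step g x = 0.
Proof.
rewrite grid_stepE; case: ifP => // /andP[ax].
by rewrite grid_index_lt // ax => ->.
Qed.

Lemma grid_step_near (C alpha : R) g x :
  0 <= C -> 0 <= alpha ->
  (forall x y, delta <= `|x - y| -> `|g x - g y| <= C * `|x - y| `^ alpha) ->
  a <= x < grid_node M ->
  `|g x - grid_step g x| <= 2 * C * (2 * delta) `^ alpha.
Proof.
move=> C_ge0 alpha_ge0 holder /andP[ax xM].
rewrite grid_stepE ax grid_index_lt // xM /=.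
exact: far_holder_near_le (grid_node_index ax).
Qed.

Lemma grid_step_delta g : step_delta delta (grid_step g).
Proof.
exists M, (g \o grid_node), grid_node, (grid_node \o S), grid_cell.
split; [|split => // j k _ _ jk].
  move=> k _; split; last by rewrite /= grid_nodeS addrAC subrr add0r.
  split; first by rewrite /= grid_nodeS lerDl ltW.
  have cellE x : grid_cell k x = (grid_node k <= x < grid_node k.+1).
    by rewrite /grid_cell /= in_itv.
  split; first by move=> x; rewrite /= in_itv /= cellE => /andP[/ltW-> ->].
  split; first by move=> x; rewrite cellE /= in_itv /= => /andP[-> /ltW->].
  move=> x y z; rewrite !cellE => /andP[lx _] /andP[_ zr] xy yz.
  by rewrite (le_trans lx xy) (le_lt_trans yz zr).
apply/seteqP; split => // x [/mem_set + /mem_set].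
rewrite !in_grid_cell => /andP[_ /eqP xj] /andP[_ /eqP xk].
by apply: jk; rewrite -xj -xk.
Qed.

Lemma measurable_grid_step g : measurable_fun setT (grid_step g).
Proof.
apply: measurable_sum => k; apply: measurable_funM => //.
exact: measurable_indic (measurable_itv _).
Qed.

End grid_step.

Lemma exists_natr_powR_le (R : realType) (alpha e t : R) :
  0 < alpha -> 0 < e -> 0 <= t ->
  exists M : nat, (0 < M)%N /\ (t / M%:R) `^ alpha <= e.
Proof.
move=> alpha_gt0 e_gt0 t_ge0; pose th := e `^ alpha^-1.
have th_gt0 : 0 < th by rewrite powR_gt0.
exists (Num.truncn (t / th)).+1; split => //.
have t_lt : t / th < (Num.truncn (t / th)).+1%:R by rewrite truncnS_gt.
apply: (le_trans (y := th `^ alpha)).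
  apply: ge0_ler_powR; first exact: ltW.
  - by rewrite nnegrE divr_ge0.
  - by rewrite nnegrE ltW.
  by rewrite ler_pdivrMr ?ltr0Sn // mulrC -ler_pdivrMr // ltW.
by rewrite /th -powRrM mulVf ?gt_eqF // powRr1 // ltW.
Qed.

Lemma integral_abs_sub_le d (T : measurableType d) (R : realType)
    (mu : measure T R) (A : set T) (f g : T -> R) (c : R) :
  measurable A -> measurable_fun setT f -> measurable_fun setT g -> 0 <= c ->
  (forall x, A x -> `|f x - g x| <= c) -> (forall x, ~ A x -> g x = 0) ->
  (\int[mu]_x `|(f x - g x)%:E|
     <= c%:E * mu A + \int[mu]_(x in ~` A) `|(f x)%:E|)%E.
Proof.
move=> mA mf mg c_ge0 near_fg g_out.
have mfg : measurable_fun setT (fun x => (f x - g x)%:E).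
  by apply/measurable_EFinP; exact: measurable_funB.
have mAC : measurable (~` A) by exact: measurableC.
have disjAC : [disjoint A & ~` A] by exact/disj_setPCl.
have m_abs : measurable_fun (A `|` ~` A) (fun x => `|(f x - g x)%:E|%E).
  by rewrite setUv; apply: measurableT_comp => //; exact: abse_measurable.
rewrite -(setUv A) ge0_integral_setU //.
have -> : (\int[mu]_(x in ~` A) `|(f x - g x)%:E|
          = \int[mu]_(x in ~` A) `|(f x)%:E|)%E.
  by apply: eq_integral => x /set_mem nAx; rewrite g_out ?subr0.
apply: leeD => //; apply: integral_le_bound => //.
  exact: measurable_funS mfg.
by apply: aeW => x Ax; rewrite lee_fin near_fg.
Qed.

Lemma integral_abs_sub_le_itv (R : realType) (f g : R -> R) (r c : R) :
  0 < r -> 0 <= c -> measurable_fun setT f -> measurable_fun setT g ->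
  (forall x, - r <= x < r -> `|f x - g x| <= c) ->
  (forall x, ~~ (- r <= x < r) -> g x = 0) ->
  (\int[lebesgue_measure]_x `|(f x - g x)%:E|
     <= (c * (2 * r))%:E
        + \int[lebesgue_measure]_(x in [set x | (r <= `|x|)%R]) `|(f x)%:E|)%E.
Proof.
move=> r_gt0 c_ge0 mf mg near_fg g_out.
pose A := [set` `[- r, r[].
have mA : measurable A by exact: measurable_itv.
apply: (le_trans (integral_abs_sub_le lebesgue_measure mA mf mg c_ge0 _ _)).
- by move=> x; rewrite /A /= in_itv; exact: near_fg.
- by move=> x; rewrite /A /= in_itv => /negP; exact: g_out.
have mB : measurable [set x : R | r <= `|x|].
  rewrite (_ : [set x | _] = Num.norm @^-1` [set` `[r, +oo[]); last first.
    by apply/seteqP; split => x /=; rewrite in_itv /= andbT.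
  have := normr_measurable measurableT (measurable_itv `[r, +oo[).
  by rewrite setTI.
have lambdaA : lebesgue_measure A = (2 * r)%:E.
  rewrite lebesgue_measure_itv /= ifT ?lte_fin ?gtrN // -EFinD opprK.
  by congr EFin; lra.
rewrite (_ : (_ * lebesgue_measure A)%E = (c * (2 * r))%:E); last first.
  by rewrite lambdaA.
apply: leeD => //; apply: ge0_subset_integral => //.
- exact: measurableC.
- apply: measurableT_comp => //.
  by apply/measurable_EFinP; exact: measurable_funS mf.
- move=> x; rewrite /A /= in_itv /= [r <= _]leNgt ltr_norml => notA.
  by apply/negP => /andP[rx xr]; apply: notA; rewrite ltW.
Qed.

Theorem lemmaA18 (R : realType) (alpha : R) (f : nat -> R -> R) :
  0 < alpha -> alpha <= 1 ->
  L1_seq f -> tight f -> approx_holder alpha f ->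
  forall eps : R, 0 < eps ->
    exists (n0 : nat) (delta : R), 0 < delta /\
      forall n, (n0 <= n)%N ->
        exists chi : R -> R, step_delta delta chi /\
          (\int[@lebesgue_measure R]_x `|(f n x - chi x)%:E| <= eps%:E)%E.
Proof.
move=> alpha_gt0 _ L1f tight_f [C [C_gt0 holder]] eps eps_gt0.
have [r [r_gt0 tail]] := tight_f _ (divr_gt0 eps_gt0 (ltr0n R 2)).
have [M [M_gt0 small]] : exists M : nat,
    (0 < M)%N /\ (4 * r / M%:R) `^ alpha <= eps / (8 * C * r).
  by apply: exists_natr_powR_le; rewrite ?divr_gt0 ?mulr_ge0 ?mulr_gt0 ?ltW.
pose delta := 2 * r / M%:R.
have delta_gt0 : 0 < delta by rewrite divr_gt0 ?mulr_gt0 ?ltr0n.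
have node_M : grid_node (- r) delta M = r.
  by rewrite /grid_node /delta mulrC divfK ?gt_eqF ?ltr0n //; lra.
have [N holderN] := holder _ delta_gt0.
exists N, delta; split => // n Nn.
exists (grid_step (- r) delta M (f n)); split; first exact: grid_step_delta.
have mf : measurable_fun setT (f n).
  by apply/measurable_EFinP; exact: measurable_int (L1f n).
have c_ge0 : 0 <= 2 * C * (2 * delta) `^ alpha.
  by rewrite mulr_ge0 ?powR_ge0 // mulr_ge0 // ltW.
apply: (le_trans (integral_abs_sub_le_itv r_gt0 c_ge0 mf
  (measurable_grid_step _ _ _ _) _ _)).
- move=> x /andP[rx xr].
  by apply: grid_step_near (ltW C_gt0) (ltW alpha_gt0) (holderN _ Nn) _ => //;
    rewrite rx node_M.
- by move=> x; rewrite -[X in x < X]node_M; exact: grid_step_out.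
rewrite [eps]splitr EFinD leeD ?tail // lee_fin.
have -> : 2 * delta = 4 * r / M%:R by rewrite /delta; ring.
rewrite (_ : _ * (2 * r) = 4 * C * r * (4 * r / M%:R) `^ alpha); last by ring.
apply: le_trans (ler_wpM2l _ small) _; first by rewrite !mulr_ge0 ?ltW.
by rewrite le_eqVlt; apply/orP; left; apply/eqP; field; rewrite !gt_eqF.
Qed.
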